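(* Let $0<q<1$. Define the $q$-Genocchi numbers $g_{n,q}$ and $q$-Genocchi polynomials $G_{n,q}(x)$ by \[ \frac{2t}{e_q(t)+1}=\sum_{n=0}^\infty g_{n,q}\frac{t^n}{[n]_q!},\qquad \frac{2t}{e_q(t)+1}e_q(tx)=\sum_{n=0}^\infty G_{n,q}(x)\frac{t^n}{[n]_q!} \] (for $t$ in a neighborhood of $0$). Then for every integer $n\ge1$, \[ \frac{1}{2q}\sum_{k=0}^{n-2}\begin{bmatrix}n\\k\end{bmatrix}_q g_{n-k,q}\,q^kG_{k,q}(x)+[n]_q\left(xq-\frac{1}{2q}\right)q^{n-1}G_{n-1,q}(x)+q^{n-1}G_{n,q}(x)-[n]_qG_{n,q}(qx)=0. \]
   Context: $[n]_q=\frac{1-q^n}{1-q}$, $[0]_q!=1$, $[n]_q!=[n]_q\cdots[1]_q$, $\begin{bmatrix}n\\k\end{bmatrix}_q=\frac{[n]_q!}{[k]_q![n-k]_q!}$, and $e_q(t)=\sum_{n\ge0}\frac{t^n}{[n]_q!}$. *)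

From Stdlib Require Import Reals.
From Coquelicot Require Import Coquelicot.
Open Scope R_scope.

Definition qint (q : R) (n : nat) : R := (1 - q ^ n) / (1 - q).

Fixpoint qfact (q : R) (n : nat) : R :=
  match n with
  | O => 1
  | S m => qint q (S m) * qfact q m
  end.

Definition qbinom (q : R) (n k : nat) : R :=
  qfact q n / (qfact q k * qfact q (n - k)).

Definition eq_exp (q t : R) : R := Series (fun n => t ^ n / qfact q n).

Fixpoint sum_lt (f : nat -> R) (m : nat) : R :=
  match m with
  | O => 0
  | S p => sum_lt f p + f p
  end.

(* Write [f(t) = 2t/(e_q(t)+1)] and [F_x(t) = f(t) e_q(tx)]. The q-difference equation
   [e_q(qt) = (1 - (1-q)t) e_q(t)] yields the functional identity
     F_x(qt) f(t)/(2q) + (xq - 1/q) t F_x(qt) + F_x(qt)/q = (F_{qx}(t) - F_{qx}(qt))/(1-q)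
   near [t = 0]. The right-hand side has coefficients [[n]_q G_{n,q}(qx)/[n]_q!], so comparing
   coefficients of [t^n] (identity theorem for power series), using [g_{0,q} = 0] and
   [g_{1,q} = 1] (read off from [f(t)(e_q(t)+1) = 2t]) and multiplying by [[n]_q!], gives the
   recurrence. *)
From Stdlib Require Import Reals Lra Lia.
From Coquelicot Require Import Coquelicot.
Open Scope R_scope.

Lemma ex_pseries_lt_CV_radius (a : nat -> R) (eps : R) :
  (forall t, Rabs t < eps -> ex_pseries a t) ->
  forall t, Rabs t < eps -> Rbar_lt (Rabs t) (CV_radius a).
Proof.
  intros Ha t Ht.
  set (r := (Rabs t + eps) / 2).
  assert (Hr : Rabs r < eps) by (pose proof (Rabs_pos t); unfold r; rewrite Rabs_pos_eq; lra).
  assert (Hlim : is_lim_seq (fun n => a n * r ^ n) 0).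
  { apply ex_series_lim_0. destruct (Ha r Hr) as [l Hl].
    exists l. apply is_pseries_R. exact Hl. }
  destruct (filterlim_bounded (fun n => a n * r ^ n)) as [M HM]; [now exists 0|].
  assert (Hle : Rbar_le r (CV_radius a)) by (apply (proj1 (CV_radius_bounded a)); now exists M).
  destruct (CV_radius a) as [c| |]; simpl in *; try tauto.
  pose proof (Rabs_pos t). unfold r in Hle. lra.
Qed.

Lemma locally_0_Rabs (P : R -> Prop) :
  locally 0 P <-> exists eps, 0 < eps /\ forall t, Rabs t < eps -> P t.
Proof.
  split.
  - intros [eps Heps]. exists eps. split; [apply cond_pos|].
    intros t Ht. apply Heps. change (Rabs (t - 0) < eps). now rewrite Rminus_0_r.
  - intros [eps [Heps HP]]. exists (mkposreal eps Heps). intros t Ht. apply HP.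
    change (Rabs (t - 0) < eps) in Ht. now rewrite Rminus_0_r in Ht.
Qed.

Definition is_pseries_near0 (a : nat -> R) (f : R -> R) : Prop :=
  locally 0 (fun t => is_pseries a t (f t)).

Lemma is_pseries_near0_CV_radius (a : nat -> R) (f : R -> R) :
  is_pseries_near0 a f -> locally 0 (fun t => Rbar_lt (Rabs t) (CV_radius a)).
Proof.
  intros Ha. apply locally_0_Rabs in Ha as [eps [Heps Ha]].
  apply locally_0_Rabs. exists eps. split; [exact Heps|].
  apply ex_pseries_lt_CV_radius. intros t Ht. exists (f t). now apply Ha.
Qed.

Lemma is_pseries_near0_ext (a : nat -> R) (f g : R -> R) :
  locally 0 (fun t => f t = g t) -> is_pseries_near0 a f -> is_pseries_near0 a g.
Proof.
  intros Hfg Ha. unfold is_pseries_near0. generalize (filter_and _ _ Hfg Ha).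
  apply filter_imp. intros t [<- H]. exact H.
Qed.

Lemma is_pseries_near0_plus (a b : nat -> R) (f g : R -> R) :
  is_pseries_near0 a f -> is_pseries_near0 b g ->
  is_pseries_near0 (PS_plus a b) (fun t => f t + g t).
Proof.
  intros Ha Hb. unfold is_pseries_near0. generalize (filter_and _ _ Ha Hb). apply filter_imp.
  intros t [Hat Hbt]. exact (is_pseries_plus _ _ _ _ _ Hat Hbt).
Qed.

Lemma is_pseries_near0_scal (c : R) (a : nat -> R) (f : R -> R) :
  is_pseries_near0 a f -> is_pseries_near0 (PS_scal c a) (fun t => c * f t).
Proof.
  unfold is_pseries_near0. apply filter_imp. intros t Ht.
  apply (is_pseries_scal c a t (f t)); [apply Rmult_comm | exact Ht].
Qed.

Lemma is_pseries_near0_incr_1 (a : nat -> R) (f : R -> R) :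
  is_pseries_near0 a f -> is_pseries_near0 (PS_incr_1 a) (fun t => t * f t).
Proof.
  unfold is_pseries_near0. apply filter_imp. intros t Ht.
  exact (is_pseries_incr_1 a t (f t) Ht).
Qed.

Lemma is_pseries_near0_mult (a b : nat -> R) (f g : R -> R) :
  is_pseries_near0 a f -> is_pseries_near0 b g ->
  is_pseries_near0 (PS_mult a b) (fun t => f t * g t).
Proof.
  intros Ha Hb. unfold is_pseries_near0.
  generalize (filter_and _ _ (filter_and _ _ Ha Hb)
    (filter_and _ _ (is_pseries_near0_CV_radius _ _ Ha) (is_pseries_near0_CV_radius _ _ Hb))).
  apply filter_imp. intros t [[Hat Hbt] [Hra Hrb]].
  exact (is_pseries_mult a b t _ _ Hat Hbt Hra Hrb).
Qed.

Lemma is_pseries_near0_minus (a b : nat -> R) (f g : R -> R) :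
  is_pseries_near0 a f -> is_pseries_near0 b g ->
  is_pseries_near0 (PS_minus a b) (fun t => f t - g t).
Proof.
  intros Ha Hb. unfold is_pseries_near0. generalize (filter_and _ _ Ha Hb). apply filter_imp.
  intros t [Hat Hbt]. exact (is_pseries_minus _ _ _ _ _ Hat Hbt).
Qed.

Lemma is_pseries_near0_comp_scal (c : R) (a : nat -> R) (f : R -> R) :
  is_pseries_near0 a f ->
  is_pseries_near0 (fun n => c ^ n * a n) (fun t => f (c * t)).
Proof.
  intros Ha. apply locally_0_Rabs in Ha as [eps [Heps Ha]].
  apply locally_0_Rabs. exists (eps / (Rabs c + 1)). split.
  { pose proof (Rabs_pos c). apply Rdiv_lt_0_compat; lra. }
  intros t Ht.
  assert (Hct : Rabs (c * t) < eps).
  { pose proof (Rabs_pos c). pose proof (Rabs_pos t). rewrite Rabs_mult.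
    apply Rmult_lt_compat_r with (r := Rabs c + 1) in Ht; [|lra].
    unfold Rdiv in Ht. rewrite Rmult_assoc, Rinv_l in Ht by lra. nra. }
  apply is_pseries_R. specialize (Ha _ Hct). apply is_pseries_R in Ha.
  eapply is_series_ext; [|exact Ha]. intros n. simpl. rewrite Rpow_mult_distr. ring.
Qed.

Lemma is_pseries_near0_unique (a b : nat -> R) (f g : R -> R) :
  is_pseries_near0 a f -> is_pseries_near0 b g ->
  locally 0 (fun t => f t = g t) -> forall n, a n = b n.
Proof.
  intros Ha Hb Hfg n. apply (is_pseries_near0_ext _ _ _ Hfg) in Ha.
  assert (Hr : forall c, is_pseries_near0 c g -> Rbar_lt 0 (CV_radius c)).
  { intros c Hc. rewrite <- Rabs_R0.
    exact (locally_singleton _ _ (is_pseries_near0_CV_radius c g Hc)). }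
  apply PSeries_ext_recip; [now apply Hr.. |].
  unfold is_pseries_near0 in *. generalize (filter_and _ _ Ha Hb).
  apply filter_imp. intros t [Hat Hbt].
  now rewrite (is_pseries_unique _ _ _ Hat), (is_pseries_unique _ _ _ Hbt).
Qed.

Lemma is_pseries_near0_pos (a : nat -> R) (f : R -> R) :
  is_pseries_near0 a f -> 0 < a 0%nat -> locally 0 (fun t => 0 < f t).
Proof.
  intros Ha Ha0.
  assert (Hcont : filterlim (PSeries a) (locally 0) (locally (PSeries a 0))).
  { apply continuity_pt_filterlim, PSeries_continuity.
    exact (locally_singleton _ _ (is_pseries_near0_CV_radius _ _ Ha)). }
  rewrite PSeries_0 in Hcont.
  unfold is_pseries_near0 in Ha.
  generalize (filter_and _ _ Ha (Hcont _ (open_gt 0 _ Ha0))). apply filter_imp.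
  intros t [Hat Hpos]. now rewrite <- (is_pseries_unique _ _ _ Hat).
Qed.

Definition PS_one : nat -> R := fun n => match n with O => 1 | S _ => 0 end.

Lemma is_pseries_near0_one : is_pseries_near0 PS_one (fun _ => 1).
Proof.
  unfold is_pseries_near0. apply filter_forall. intros t. apply is_pseries_R, is_series_decr_1.
  match goal with |- is_series _ ?l => replace l with 0 by (compute; ring) end.
  unfold is_series. eapply filterlim_ext; [|apply filterlim_const].
  intros n. rewrite <- (sum_n_ext (fun _ => 0)) by (intros; simpl; ring).
  rewrite sum_n_const. symmetry. apply Rmult_0_r.
Qed.

Lemma qint_S_ge_1 (q : R) (n : nat) : 0 < q < 1 -> 1 <= qint q (S n).
Proof.
  intros Hq.
  assert (Hqn : 0 <= q ^ n <= 1).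
  { destruct n as [|n]; [simpl; lra|].
    pose proof (pow_lt_1_compat q (S n) ltac:(lra) ltac:(lia)). lra. }
  unfold qint. apply Rmult_le_reg_r with (1 - q); [lra|].
  unfold Rdiv. rewrite Rmult_assoc, Rinv_l by lra. simpl in *. nra.
Qed.

Lemma qfact_ge_1 (q : R) (n : nat) : 0 < q < 1 -> 1 <= qfact q n.
Proof.
  intros Hq. induction n as [|n IHn]; simpl; [lra|].
  pose proof (qint_S_ge_1 q n Hq). nra.
Qed.

Lemma qfact_neq_0 (q : R) (n : nat) : 0 < q < 1 -> qfact q n <> 0.
Proof. intros Hq. pose proof (qfact_ge_1 q n Hq). lra. Qed.

Lemma is_pseries_eq_exp (q t : R) : 0 < q < 1 -> Rabs t < 1 ->
  is_pseries (fun n => / qfact q n) t (eq_exp q t).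
Proof.
  intros Hq Ht. apply is_pseries_R.
  eapply is_series_ext; [intros n; unfold Rdiv; apply Rmult_comm|].
  apply Series_correct.
  apply (@ex_series_le R_AbsRing R_CompleteNormedModule _ (fun n => Rabs t ^ n)).
  - intros n. change (norm (t ^ n / qfact q n)) with (Rabs (t ^ n / qfact q n)).
    pose proof (qfact_ge_1 q n Hq). pose proof (pow_le (Rabs t) n (Rabs_pos t)).
    unfold Rdiv. rewrite Rabs_mult, Rabs_inv, <- RPow_abs, (Rabs_pos_eq (qfact q n)) by lra.
    rewrite <- (Rmult_1_r (Rabs t ^ n)) at 2. apply Rmult_le_compat_l; [lra|].
    rewrite <- Rinv_1. apply Rinv_le_contravar; lra.
  - apply ex_series_geom. now rewrite Rabs_Rabsolu.
Qed.

Lemma is_pseries_near0_eq_exp (q : R) : 0 < q < 1 ->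
  is_pseries_near0 (fun n => / qfact q n) (eq_exp q).
Proof.
  intros Hq. apply locally_0_Rabs. exists 1. split; [lra|].
  intros t. exact (is_pseries_eq_exp q t Hq).
Qed.

Lemma eq_exp_pos_near0 (q : R) : 0 < q < 1 -> locally 0 (fun t => 0 < eq_exp q t).
Proof.
  intros Hq. apply (is_pseries_near0_pos _ _ (is_pseries_near0_eq_exp q Hq)).
  simpl. rewrite Rinv_1. lra.
Qed.

(* [e_q(t) - e_q(qt) = (1 - q) t e_q(t)], compared coefficientwise via
   [[n]_q! = [n]_q [n-1]_q!]. *)
Lemma eq_exp_qshift (q t : R) : 0 < q < 1 -> Rabs t < 1 ->
  eq_exp q (q * t) = (1 - (1 - q) * t) * eq_exp q t.
Proof.
  intros Hq Ht. set (e := fun n => / qfact q n).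
  assert (Hqt : Rabs (q * t) < 1).
  { rewrite Rabs_mult, Rabs_pos_eq by lra. pose proof (Rabs_pos t). nra. }
  assert (Hshift : is_pseries (fun n => q ^ n * e n) t (eq_exp q (q * t))).
  { apply is_pseries_R. pose proof (is_pseries_eq_exp q _ Hq Hqt) as H.
    apply is_pseries_R in H. eapply is_series_ext; [|exact H].
    intros n. simpl. rewrite Rpow_mult_distr. unfold e. ring. }
  pose proof (is_pseries_minus _ _ _ _ _ (is_pseries_eq_exp q t Hq Ht) Hshift) as Hdiff.
  pose proof (is_pseries_scal (1 - q) _ _ _ (Rmult_comm _ _)
                (is_pseries_incr_1 _ _ _ (is_pseries_eq_exp q t Hq Ht))) as Hincr.
  assert (Hcoef : forall n, PS_minus e (fun n => q ^ n * e n) n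
                          = PS_scal (1 - q) (PS_incr_1 e) n).
  { intros [|n]; cbn -[pow qfact]; unfold plus, opp, scal, mult; simpl.
    - ring.
    - pose proof (pow_lt_1_compat q (S n) ltac:(lra) ltac:(lia)).
      pose proof (qfact_neq_0 q n Hq). unfold e. simpl in *. unfold qint.
      simpl pow. field. repeat split; lra. }
  apply (is_pseries_ext _ _ _ _ Hcoef) in Hdiff. unfold e in *.
  pose proof (is_pseries_unique _ _ _ Hdiff) as U1.
  rewrite (is_pseries_unique _ _ _ Hincr) in U1.
  unfold plus, opp, scal in U1; simpl in U1.
  change (mult (1 - q) (mult t (eq_exp q t))) with ((1 - q) * (t * eq_exp q t)) in U1. lra.
Qed.

Lemma sum_lt_sum_f_R0 (f : nat -> R) (m : nat) : sum_lt f (S m) = sum_f_R0 f m.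
Proof. induction m as [|m IHm]; simpl in *; [ring | now rewrite IHm]. Qed.

Lemma sum_lt_ext (f h : nat -> R) (m : nat) :
  (forall k, f k = h k) -> sum_lt f m = sum_lt h m.
Proof. intros Hfh. induction m as [|m IHm]; simpl; [reflexivity | now rewrite IHm, Hfh]. Qed.

Lemma sum_lt_scal_l (c : R) (f : nat -> R) (m : nat) :
  sum_lt (fun k => c * f k) m = c * sum_lt f m.
Proof. induction m as [|m IHm]; simpl; [ring | rewrite IHm; ring]. Qed.

Lemma PS_mult_succ (a b : nat -> R) (m : nat) :
  PS_mult a b (S m)
  = sum_lt (fun k => a k * b (S m - k)%nat) m + a m * b 1%nat + a (S m) * b 0%nat.
Proof.
  unfold PS_mult. rewrite tech5, <- sum_lt_sum_f_R0.
  change (sum_lt ?f (S m)) with (sum_lt f m + f m). cbv beta.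
  now rewrite Nat.sub_diag, Nat.sub_succ_l, Nat.sub_diag by lia.
Qed.

Definition genocchi_gf (q t : R) : R := 2 * t / (eq_exp q t + 1).

Definition genocchi_poly_gf (q x t : R) : R := genocchi_gf q t * eq_exp q (t * x).

Lemma is_pseries_near0_qegf (q : R) (c : nat -> R) (h : R -> R) :
  (exists eps, 0 < eps /\
     forall t, Rabs t < eps -> is_series (fun n => c n * t ^ n / qfact q n) (h t)) ->
  is_pseries_near0 (fun n => c n / qfact q n) h.
Proof.
  intros Hc. apply locally_0_Rabs in Hc. unfold is_pseries_near0. revert Hc.
  apply filter_imp. intros t Ht. apply is_pseries_R.
  eapply is_series_ext; [|exact Ht]. intros n. simpl. unfold Rdiv. ring.
Qed.

Lemma genocchi_number_0_1 (q : R) (gam : nat -> R) : 0 < q < 1 ->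
  is_pseries_near0 gam (genocchi_gf q) -> gam 0%nat = 0 /\ gam 1%nat = 1.
Proof.
  intros Hq Hgam.
  assert (Hlhs := is_pseries_near0_plus _ _ _ _
                    (is_pseries_near0_mult _ _ _ _ Hgam (is_pseries_near0_eq_exp q Hq)) Hgam).
  assert (Hrhs := is_pseries_near0_scal 2 _ _ (is_pseries_near0_incr_1 _ _ is_pseries_near0_one)).
  assert (Hcoef := is_pseries_near0_unique _ _ _ _ Hlhs Hrhs).
  assert (Hloc : locally 0 (fun t => genocchi_gf q t * eq_exp q t + genocchi_gf q t = 2 * (t * 1))).
  { generalize (eq_exp_pos_near0 q Hq). apply filter_imp. intros t Ht.
    unfold genocchi_gf. field. lra. }
  specialize (Hcoef Hloc).
  pose proof (Hcoef 0%nat) as H0. pose proof (Hcoef 1%nat) as H1.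
  cbn -[qfact] in H0, H1. unfold plus, scal, mult in H0, H1. simpl in H0, H1.
  rewrite Rinv_1 in H0, H1.
  assert (Hg0 : gam 0%nat = 0) by lra. rewrite Hg0 in H1. split; lra.
Qed.

(* After the q-shifts [e_q(qt) = (1 - (1-q)t) e_q(t)] and [e_q(q^2tx) = (1 - (1-q)qtx) e_q(qtx)]
   this is an identity of rational functions; positivity of [e_q(qt)] follows from that of
   [e_q(t)], since [|t| < 1]. *)
Lemma genocchi_poly_gf_qdiff (q x t : R) :
  0 < q < 1 -> Rabs t < 1 -> Rabs (t * x) < 1 -> 0 < eq_exp q t ->
  / (2 * q) * (genocchi_poly_gf q x (q * t) * genocchi_gf q t)
  + (x * q - / q) * (t * genocchi_poly_gf q x (q * t))
  + / q * genocchi_poly_gf q x (q * t)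
  = / (1 - q) * (genocchi_poly_gf q (q * x) t - genocchi_poly_gf q (q * x) (q * t)).
Proof.
  intros Hq Ht Htx HA.
  assert (Hqtx : Rabs (q * t * x) < 1).
  { rewrite Rmult_assoc, Rabs_mult, (Rabs_pos_eq q) by lra. pose proof (Rabs_pos (t * x)). nra. }
  assert (Hlin : 0 < 1 - (1 - q) * t).
  { pose proof (Rabs_pos t). assert (t < 1) by (apply Rabs_def2 in Ht; lra). nra. }
  unfold genocchi_poly_gf, genocchi_gf.
  replace (t * (q * x)) with (q * t * x) by ring.
  replace (q * t * (q * x)) with (q * (q * t * x)) by ring.
  rewrite (eq_exp_qshift q (q * t * x) Hq Hqtx), (eq_exp_qshift q t Hq Ht).
  field. repeat split; nra.
Qed.

Lemma genocchi_poly_coef_qdiff (q x : R) (gam Gx Gqx : nat -> R) : 0 < q < 1 ->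
  is_pseries_near0 gam (genocchi_gf q) ->
  is_pseries_near0 Gx (genocchi_poly_gf q x) ->
  is_pseries_near0 Gqx (genocchi_poly_gf q (q * x)) ->
  forall n,
    / (2 * q) * PS_mult (fun k => q ^ k * Gx k) gam n
    + (x * q - / q) * PS_incr_1 (fun k => q ^ k * Gx k) n
    + / q * (q ^ n * Gx n)
    = / (1 - q) * (Gqx n - q ^ n * Gqx n).
Proof.
  intros Hq Hgam HGx HGqx.
  assert (HGx_q := is_pseries_near0_comp_scal q _ _ HGx).
  assert (Hlhs := is_pseries_near0_plus _ _ _ _
    (is_pseries_near0_plus _ _ _ _
       (is_pseries_near0_scal (/ (2 * q)) _ _ (is_pseries_near0_mult _ _ _ _ HGx_q Hgam))
       (is_pseries_near0_scal (x * q - / q) _ _ (is_pseries_near0_incr_1 _ _ HGx_q)))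
    (is_pseries_near0_scal (/ q) _ _ HGx_q)).
  assert (Hrhs := is_pseries_near0_scal (/ (1 - q)) _ _
    (is_pseries_near0_minus _ _ _ _ HGqx (is_pseries_near0_comp_scal q _ _ HGqx))).
  apply (is_pseries_near0_unique _ _ _ _ Hlhs Hrhs).
  assert (Hsmall : locally 0 (fun t => Rabs t < 1 /\ Rabs (t * x) < 1)).
  { apply locally_0_Rabs. exists (/ (1 + Rabs x)).
    pose proof (Rabs_pos x). split; [apply Rinv_0_lt_compat; lra|].
    intros t Ht. pose proof (Rabs_pos t).
    assert (Htx : Rabs t * (1 + Rabs x) < 1).
    { apply Rmult_lt_compat_r with (r := 1 + Rabs x) in Ht; [|lra].
      now rewrite Rinv_l in Ht by lra. }
    rewrite Rabs_mult. split; nra. }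
  generalize (filter_and _ _ Hsmall (eq_exp_pos_near0 q Hq)). apply filter_imp.
  intros t [[Ht Htx] HA]. exact (genocchi_poly_gf_qdiff q x t Hq Ht Htx HA).
Qed.

Theorem theorem7 (q : R) (g : nat -> R) (G : nat -> R -> R) :
  0 < q < 1 ->
  (exists eps : R, 0 < eps /\
     forall t : R, Rabs t < eps ->
       is_series (fun n => g n * t ^ n / qfact q n)
                 (2 * t / (eq_exp q t + 1))) ->
  (forall x : R, exists eps : R, 0 < eps /\
     forall t : R, Rabs t < eps ->
       is_series (fun n => G n x * t ^ n / qfact q n)
                 (2 * t / (eq_exp q t + 1) * eq_exp q (t * x))) ->
  forall (n : nat) (x : R), (1 <= n)%nat ->
    / (2 * q) * sum_lt (fun k => qbinom q n k * g (n - k)%nat * q ^ k * G k x) (n - 1)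
    + qint q n * (x * q - / (2 * q)) * q ^ (n - 1) * G (n - 1)%nat x
    + q ^ (n - 1) * G n x
    - qint q n * G n (q * x) = 0.
Proof.
  intros Hq Hg HG n x Hn.
  set (gam := fun k => g k / qfact q k).
  set (Gs := fun y k => G k y / qfact q k).
  assert (Hgam : is_pseries_near0 gam (genocchi_gf q)) by exact (is_pseries_near0_qegf q g _ Hg).
  assert (HGs : forall y, is_pseries_near0 (Gs y) (genocchi_poly_gf q y))
    by (intros y; exact (is_pseries_near0_qegf q (fun k => G k y) _ (HG y))).
  destruct (genocchi_number_0_1 q gam Hq Hgam) as [Hgam0 Hgam1].
  destruct n as [|m]; [lia|]. replace (S m - 1)%nat with m by lia.
  pose proof (genocchi_poly_coef_qdiff q x gam (Gs x) (Gs (q * x))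
                Hq Hgam (HGs x) (HGs (q * x)) (S m)) as Hcoef.
  rewrite PS_mult_succ, Hgam0, Hgam1 in Hcoef. simpl PS_incr_1 in Hcoef.
  rewrite (sum_lt_ext _ (fun k => qfact q (S m) * (q ^ k * Gs x k * gam (S m - k)%nat))),
    sum_lt_scal_l.
  2:{ intros k. unfold Gs, gam, qbinom. field. split; apply qfact_neq_0, Hq. }
  pose proof (qfact_neq_0 q m Hq).
  pose proof (pow_lt_1_compat q (S m) ltac:(lra) ltac:(lia)).
  apply Rminus_diag_eq in Hcoef.
  unfold Gs in *. simpl qfact in *. unfold qint in *. simpl pow in *.
  match type of Hcoef with ?L = 0 => transitivity ((1 - q * q ^ m) / (1 - q) * qfact q m * L) end.
  - field. repeat split; lra.
  - rewrite Hcoef. ring.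
Qed.
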